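(* Let $H$ be an (inclusion-wise) minimal feasible solution of a $k$-Flexible Steiner Tree instance with $k$ terminals, and let $\mathrm{CBT}(H)$ be a condensed block-tree of $H$ (obtained from a block-tree $\mathrm{BT}(H)$ in which every leaf corresponds to a block of $H$ containing exactly one terminal, so that the leaves of $\mathrm{CBT}(H)$ correspond to the terminals). Call the 2NC blocks of $H$ corresponding to internal nodes of $\mathrm{CBT}(H)$ high-degree blocks. Then the total number of cut-nodes of $H$ lying in high-degree blocks, counted with repetitions (once for each high-degree block containing it), is at most $3k-6$.
   Context: $k$-Flexible Steiner Tree: the input is an undirected graph $G=(V,E)$ whose edge set is partitioned into safe edges and unsafe edges, and a terminal set $T\subseteq V$ with $|T|=k\geq3$; a feasible solution is a connected subgraph $H=(U,F)$ with $T\subseteq U$ such that $H-e$ is connected for every unsafe edge $e\in F$. A block of a graph is a maximal connected subgraph without a cut-node; a 2NC block is a block that is 2-node-connected. A block-tree $\mathrm{BT}(H)$ of $H$ is a tree whose nodes are in one-to-one correspondence with the 2NC blocks of $H$, such that two nodes are adjacent if the corresponding blocks are joined by a bridge of $H$, and for every cut-node $v$ of $H$ the set of nodes corresponding to 2NC blocks containing $v$ induces a connected subtree. A condensed block-tree $\mathrm{CBT}(H)$ is obtained from $\mathrm{BT}(H)$ by keeping exactly the nodes $b$ with $\deg_{\mathrm{BT}(H)}(b)\neq2$, two such nodes being adjacent iff every internal node of the path between them in $\mathrm{BT}(H)$ has degree two. The paper works on the modified instance in which, for each terminal $v$, a new node $v'$ and a new safe edge $vv'$ are added and the new nodes are the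 terminals, and it is assumed (as stated in the paper) that every leaf of $\mathrm{BT}(H)$ corresponds to a block containing exactly one terminal. *)

(* Graphs are finite simple graphs on a finType W;
   an edge is a 2-element set {x,y} : {set W}.  A (sub)graph is a pair
   (U, F) of a node set and an edge set. *)
From HB Require Import structures.
From mathcomp Require Import all_boot.
Set Implicit Arguments. Unset Strict Implicit. Unset Printing Implicit Defensive.

Section Graphs.
Variable W : finType.

Definition graph := ({set W} * {set {set W}})%type.

Definition adj (U : {set W}) (F : {set {set W}}) : rel W :=
  fun x y => [&& x \in U, y \in U & [set x; y] \in F].

Definition gconnected (U : {set W}) (F : {set {set W}}) : bool :=
  [forall x in U, [forall y in U, connect (adj U F) x y]].

Definition del_node_edges (F : {set {set W}}) (w : W) : {set {set W}} :=
  [set e in F | w \notin e].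

Definition cut_node (H : graph) (v : W) : bool :=
  (v \in H.1) && ~~ gconnected (H.1 :\ v) (del_node_edges H.2 v).

Definition is_bridge (H : graph) (e : {set W}) : bool :=
  (e \in H.2) && ~~ gconnected H.1 (H.2 :\ e).

Definition subgraph (B H : graph) : bool :=
  [&& B.1 \subset H.1, B.2 \subset H.2 & [forall e in B.2, e \subset B.1]].

(* 2-node-connected: nonempty, connected, without cut-node; a single node is
   2-node-connected, a single edge (two nodes) is not (it is a bridge block). *)
Definition twoNC (B : graph) : bool :=
  [&& B.1 != set0, gconnected B.1 B.2,
      [forall w in B.1, gconnected (B.1 :\ w) (del_node_edges B.2 w)]
    & #|B.1| != 2].

Definition is2NCblock (H B : graph) : bool :=
  [&& subgraph B H, twoNC B &
      [forall B' : graph, [&& subgraph B' H, twoNC B' & subgraph B B'] ==> (B' == B)]].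

End Graphs.

Section Trees.
Variable N : finType.

Definition is_tree (r : rel N) : Prop :=
  [/\ 0 < #|N|, irreflexive r, symmetric r,
      (forall x y : N, connect r x y) &
      #|[set [set p.1; p.2] | p in [set p : N * N | r p.1 p.2]]|.+1 = #|N| ].

Definition tdeg (r : rel N) (a : N) : nat := #|[set b | r a b]|.

Definition induced (r : rel N) (S : {set N}) : rel N :=
  fun x y => [&& r x y, x \in S & y \in S].

Definition deg2_path (r : rel N) (a b : N) : Prop :=
  exists p : seq N,
    [/\ path r a p, last a p = b, uniq (a :: p) &
        all (fun x => tdeg r x == 2) (behead (belast a p))].

Definition is_condensed (r cbt : rel N) : Prop :=
  forall a b, cbt a b <->
    [/\ tdeg r a != 2, tdeg r b != 2, a != b & deg2_path r a b].

End Trees.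

Definition block_tree_adj (W N : finType) (H : graph W) (blk : N -> graph W)
    (bt : rel N) : Prop :=
  (forall a b (e : {set W}) x y, is_bridge H e -> e = [set x; y] ->
          x \in (blk a).1 -> y \in (blk b).1 -> bt a b) /\
      (forall v, cut_node H v ->
          let S := [set a | v \in (blk a).1] in
          forall a b, a \in S -> b \in S -> connect (induced bt S) a b).

Definition block_tree (W N : finType) (H : graph W) (blk : N -> graph W)
    (bt : rel N) : Prop :=
  [/\ injective blk,
      (forall a, is2NCblock H (blk a)),
      (forall B, is2NCblock H B -> exists a, blk a = B),
      is_tree bt &
      block_tree_adj H blk bt ].

(* the modified instance: vertices V + V, terminal t of the original instance is
   replaced by the new terminal inr t attached to inl t by a new safe edge *)
Definition mod_edges (V : finType) (E : {set {set V}}) (T : {set V})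
    : {set {set (V + V)}} :=
  [set (@inl V V) @: e | e : {set V} in E] :|: [set [set inl t; inr t] | t : V in T].

Definition mod_unsafe (V : finType) (Un : {set {set V}}) : {set {set (V + V)}} :=
  [set (@inl V V) @: e | e : {set V} in Un].

Definition mod_terminals (V : finType) (T : {set V}) : {set (V + V)} :=
  (@inr V V) @: T.

Definition feasible (W : finType) (Eg Un : {set {set W}}) (Tg : {set W})
    (H : graph W) : Prop :=
  [/\ H.2 \subset Eg, [forall e in H.2, e \subset H.1], Tg \subset H.1,
      gconnected H.1 H.2 &
      forall e, e \in H.2 -> e \in Un -> gconnected H.1 (H.2 :\ e)].

Definition minimal_feasible (W : finType) (Eg Un : {set {set W}}) (Tg : {set W})
    (H : graph W) : Prop :=
  feasible Eg Un Tg H /\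
  forall H' : graph W, feasible Eg Un Tg H' -> H'.1 \subset H.1 ->
    H'.2 \subset H.2 -> H' = H.

(* Each cut-node [v] of a block [B] is charged to a neighbour of [B] in the
   block tree: a block that also contains [v], or else the block at the far end of
   a bridge at [v], which exists because [v] separates [H].  Two cut-nodes of [B]
   charged to the same neighbour [C] would close a cycle through [B] and [C],
   contradicting the maximality of blocks or the bridge.  So a block has at most
   as many cut-nodes as block-tree neighbours, and a high-degree block has
   block-tree degree at least 3, since condensing does not increase degrees.  By
   the handshake lemma the degrees >= 3 of a tree with [L] leaves sum to at most
   [3 L - 6], and [L <= k] because every leaf block contains a terminal [inr t],
   whose only 2NC block is the singleton [{inr t}]. *)

From HB Require Import structures.
From mathcomp Require Import all_boot zify.
Set Implicit Arguments. Unset Strict Implicit. Unset Printing Implicit Defensive.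

Lemma card_le_of_rel (T1 T2 : finType) (A : {set T1}) (B : {set T2}) (R : T1 -> T2 -> Prop) :
  (forall x, x \in A -> exists2 y, y \in B & R x y) ->
  (forall x x' y, x \in A -> x' \in A -> R x y -> R x' y -> x = x') -> #|A| <= #|B|.
Proof.
move=> ex inj.
have [f fP] : exists f : T1 -> option T2,
    forall x, x \in A -> exists2 y, f x = Some y & y \in B /\ R x y.
  apply: (fin_all_exists (P := fun x o => x \in A -> exists2 y, o = Some y & y \in B /\ R x y)).
  move=> x; have [xA|_] := boolP (x \in A); last by exists None.
  by have [y yB Rxy] := ex x xA; exists (Some y) => _; exists y.
rewrite -(card_in_imset (f := f)); last first.
  move=> x x' xA x'A; have [y -> [_ Rxy]] := fP x xA.
  by have [y' -> [_ Rx'y']] := fP x' x'A; move=> [eyy']; apply: (inj x x' y) => //; rewrite eyy'.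
rewrite -(card_imset B (@Some_inj _)); apply: subset_leq_card.
by apply/subsetP=> _ /imsetP[x /fP[y -> [yB _]] ->]; apply: imset_f.
Qed.

Lemma card_set_sum (T : finType) (P : pred T) : #|[set a | P a]| = \sum_a P a.
Proof. by rewrite -sum1dep_card big_mkcond; apply: eq_bigr => a _; case: (P a). Qed.

Section Connectivity.
Variable W : finType.
Implicit Types (U : {set W}) (F : {set {set W}}).

Lemma set2_eq_cases (a b p q : W) : [set a; b] = [set p; q] ->
  (a = p /\ b = q) \/ (a = q /\ b = p).
Proof.
move=> E; have := set21 a b; have := set22 a b.
have := set21 p q; have := set22 p q; rewrite -{1 2}E {3 4}E.
by move=> /set2P[] -> /set2P[] -> /set2P[] hp /set2P[] hq; subst; auto.
Qed.

Lemma adj_sym U F : symmetric (adj U F).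
Proof. by move=> x y; rewrite /adj setUC; case: (x \in U); case: (y \in U). Qed.

Lemma connect_adjC U F x y : connect (adj U F) x y = connect (adj U F) y x.
Proof. exact: (sym_connect_sym (@adj_sym U F)). Qed.

Lemma connect_adjS U U' F F' x y : U \subset U' -> F \subset F' ->
  connect (adj U F) x y -> connect (adj U' F') x y.
Proof.
move=> sU sF; apply: connect_sub => a b /and3P[aU bU eF].
by apply: connect1; rewrite /adj (subsetP sU _ aU) (subsetP sU _ bU) (subsetP sF _ eF).
Qed.

Lemma gconnectedP U F :
  reflect (forall x y, x \in U -> y \in U -> connect (adj U F) x y) (gconnected U F).
Proof.
apply: (iffP forall_inP) => [h x y xU | h x xU]; first by move/forall_inP: (h x xU); apply.
by apply/forall_inP => y; apply: h.
Qed.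

Lemma gconnectedU U1 U2 F1 F2 s : gconnected U1 F1 -> gconnected U2 F2 ->
  s \in U1 -> s \in U2 -> gconnected (U1 :|: U2) (F1 :|: F2).
Proof.
move=> /gconnectedP C1 /gconnectedP C2 s1 s2.
have to_s x : x \in U1 :|: U2 -> connect (adj (U1 :|: U2) (F1 :|: F2)) x s.
  case/setUP => [x1|x2]; first exact: connect_adjS (subsetUl _ _) (subsetUl _ _) (C1 _ _ x1 s1).
  exact: connect_adjS (subsetUr _ _) (subsetUr _ _) (C2 _ _ x2 s2).
apply/gconnectedP => x y xU yU.
by apply: connect_trans (to_s x xU) _; rewrite connect_adjC; apply: to_s.
Qed.

Lemma connect_adjD1 U F p q : connect (adj U (F :\ [set p; q])) p q ->
  forall x y, connect (adj U F) x y -> connect (adj U (F :\ [set p; q])) x y.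
Proof.
move=> Hpq x y; apply: connect_sub => a b /and3P[aU bU eF].
have [/set2_eq_cases[[-> ->]|[-> ->]] | ne] := eqVneq [set a; b] [set p; q].
- exact: Hpq.
- by rewrite connect_adjC.
- by apply: connect1; rewrite /adj aU bU !inE ne eF.
Qed.

Lemma connect_first_step (r : rel W) x z : connect r x z -> x != z -> exists y, r x y.
Proof.
case/connectP => [[|y p]] /=; first by move=> _ ->; rewrite eqxx.
by case/andP=> rxy _ _ _; exists y.
Qed.

Lemma connect_last_step U F x v : connect (adj U F) x v -> x != v ->
  exists w, [/\ adj U F w v, w != v & connect (adj (U :\ v) (del_node_edges F v)) x w].
Proof.
case/connectP=> p; elim: p x => [|y p IH] x /=; first by move=> _ ->; rewrite eqxx.
case/andP=> axy pp lst xv.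
have [yv|yv] := eqVneq y v; first by exists x; split => //; rewrite -yv.
have [w [awv wv cyw]] := IH y pp lst yv.
exists w; split => //; apply: connect_trans _ cyw; apply: connect1.
case/and3P: axy => xU yU exy.
by rewrite /adj !in_setD1 xv xU yv yU /del_node_edges in_set exy !inE negb_or eq_sym xv eq_sym yv.
Qed.

Lemma path_adj_sub U F x p : path (adj U F) x p -> all (mem U) p.
Proof. by elim: p x => //= y p IH x /andP[/and3P[_ -> _] /IH]. Qed.

Lemma path_gconnected U F x p : path (adj U F) x p -> {subset U <= x :: p} ->
  gconnected U F.
Proof.
move=> pth sU; apply/gconnectedP => y z /sU yp /sU zp.
apply: connect_trans _ (path_connect pth zp); rewrite connect_adjC.
exact: (path_connect pth yp).
Qed.

Lemma del_node_edgesS F F' w : F \subset F' -> del_node_edges F w \subset del_node_edges F' w.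
Proof. by move=> sF; apply/subsetP=> e; rewrite !inE => /andP[/(subsetP sF) -> ->]. Qed.

End Connectivity.

(* How a cut-node [v] is charged to a block [B] adjacent in the block tree. *)
Definition attached (W : finType) (H : graph W) (v : W) (B : graph W) : bool :=
  (v \in B.1) || [exists u in B.1, is_bridge H [set v; u]].

Definition induced_graph (W : finType) (H : graph W) (C : {set W}) : graph W :=
  (C, [set f in H.2 | f \subset C]).

Section Blocks.
Variable W : finType.
Variable H : graph W.
Hypothesis edges_sub : forall e, e \in H.2 -> e \subset H.1.
Hypothesis edges_card : forall e, e \in H.2 -> #|e| = 2.
Hypothesis H_connected : gconnected H.1 H.2.
Implicit Types (B : graph W).

Lemma subgraph_edge_sub B e : subgraph B H -> e \in B.2 -> e \subset B.1.
Proof. by case/and3P=> _ _ /forall_inP; apply. Qed.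

Lemma subgraph_trans (A B C : graph W) : subgraph A B -> subgraph B C -> subgraph A C.
Proof.
case/and3P=> a1 a2 a3 /and3P[b1 b2 _].
by apply/and3P; split; [apply: subset_trans b1 | apply: subset_trans b2 | ].
Qed.

Lemma induced_graph_subgraph (C : {set W}) : C \subset H.1 -> subgraph (induced_graph H C) H.
Proof.
move=> sC; apply/and3P; split => //=; first by apply/subsetP=> f; rewrite inE => /andP[].
by apply/forall_inP=> f; rewrite inE => /andP[].
Qed.

Lemma edge_set2 e : e \in H.2 -> exists p q, p != q /\ e = [set p; q].
Proof. by move=> /edges_card /eqP /cards2P. Qed.

Lemma twoNC_del B w : subgraph B H -> twoNC B ->
  gconnected (B.1 :\ w) (del_node_edges B.2 w).
Proof.
move=> sB /and4P[_ Bc /forall_inP Hw _].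
have [/Hw //|wB] := boolP (w \in B.1).
have -> : B.1 :\ w = B.1 by apply/setDidPl; rewrite disjoint_sym disjoints1.
have -> // : del_node_edges B.2 w = B.2.
apply/setP=> e; rewrite !inE; case eB: (e \in B.2) => //=.
by apply: contraNN wB; apply: (subsetP (subgraph_edge_sub sB eB)).
Qed.

Lemma twoNC_card_gt2 B x y : twoNC B -> x \in B.1 -> y \in B.1 -> x != y -> 2 < #|B.1|.
Proof.
case/and4P=> _ _ _ B2 xB yB xy; rewrite ltn_neqAle eq_sym B2 /=.
have sub : [set x; y] \subset B.1 by apply/subsetP=> z /set2P[] ->.
by move: (subset_leq_card sub); rewrite cards2 xy.
Qed.

Lemma twoNC_third_node B p q : twoNC B -> p \in B.1 -> q \in B.1 -> p != q ->
  exists z, [/\ z \in B.1, z != p & z != q].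
Proof.
move=> tB pB qB pq; have := twoNC_card_gt2 tB pB qB pq.
rewrite (cardsD1 p) pB (cardsD1 q) !inE eq_sym pq qB !add1n !ltnS card_gt0.
by case/set0Pn=> z; rewrite !inE => /and3P[zq zp zB]; exists z.
Qed.

(* For an edge [pq] of [B], a third node [z] of [B] yields a [p]-[q] path avoiding
   it: from [p] to [z] in [B - q], then from [z] to [q] in [B - p]. *)
Lemma connect_twoNC_setD1 B e x y : subgraph B H -> twoNC B ->
  x \in B.1 -> y \in B.1 -> connect (adj H.1 (H.2 :\ e)) x y.
Proof.
move=> sB tB xB yB; have /and3P[sB1 sB2 _] := sB; have /and4P[_ /gconnectedP Bc _ _] := tB.
have [eB|eB] := boolP (e \in B.2); last first.
  apply: connect_adjS sB1 _ (Bc _ _ xB yB); apply/subsetP=> f fB.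
  by rewrite !inE (subsetP sB2 _ fB) andbT; apply: (contraNneq _ eB) => <-.
have [p [q [pq Ee]]] := edge_set2 (subsetP sB2 _ eB); subst e.
have [pB qB] : p \in B.1 /\ q \in B.1.
  by split; apply: (subsetP (subgraph_edge_sub sB eB)); rewrite !inE eqxx ?orbT.
have [z [zB zp zq]] := twoNC_third_node tB pB qB pq.
have avoid w : w \in [set p; q] -> forall a b, a \in B.1 -> b \in B.1 -> a != w -> b != w ->
    connect (adj B.1 (B.2 :\ [set p; q])) a b.
  move=> we a b aB bB aw bw.
  apply: (connect_adjS (U := B.1 :\ w) (F := del_node_edges B.2 w) (subsetDl _ _)).
    apply/subsetP=> f; rewrite !inE => /andP[fB wf]; rewrite fB andbT.
    by apply: (contraNneq _ wf) => ->.
  by apply: (gconnectedP _ _ (twoNC_del w sB tB)); rewrite in_setD1 ?aw ?bw.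
have cpq : connect (adj B.1 (B.2 :\ [set p; q])) p q.
  apply: (connect_trans (y := z)).
    by apply: (avoid q) => //; rewrite ?set22 // eq_sym.
  by apply: (avoid p) => //; rewrite ?set21 // eq_sym.
apply: connect_adjS sB1 (setSD _ sB2) _.
exact: connect_adjD1 cpq _ _ (Bc _ _ xB yB).
Qed.

Lemma bridge_disconnected x y : is_bridge H [set x; y] ->
  ~ connect (adj H.1 (H.2 :\ [set x; y])) x y.
Proof.
case/andP=> _ /negP nc cxy; apply: nc; apply/gconnectedP => a b aH bH.
exact: connect_adjD1 cxy _ _ (gconnectedP _ _ H_connected _ _ aH bH).
Qed.

Lemma twoNCU B1 B2 v v' : subgraph B1 H -> subgraph B2 H -> twoNC B1 -> twoNC B2 ->
  v != v' -> v \in B1.1 -> v' \in B1.1 -> v \in B2.1 -> v' \in B2.1 ->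
  subgraph (B1.1 :|: B2.1, B1.2 :|: B2.2) H /\ twoNC (B1.1 :|: B2.1, B1.2 :|: B2.2).
Proof.
move=> s1 s2 t1 t2 vv' v1 v'1 v2 v'2.
have /and3P[s11 s12 _] := s1; have /and3P[s21 s22 _] := s2.
split.
  apply/and3P; split; rewrite /= ?subUset ?s11 ?s12 ?s21 ?s22 //.
  apply/forall_inP=> e /setUP[] eB.
    exact: subset_trans (subgraph_edge_sub s1 eB) (subsetUl _ _).
  exact: subset_trans (subgraph_edge_sub s2 eB) (subsetUr _ _).
have /and4P[_ c1 _ _] := t1; have /and4P[_ c2 _ _] := t2.
apply/and4P; split => /=.
- by apply/set0Pn; exists v; rewrite inE v1.
- exact: gconnectedU c1 c2 v1 v2.
- apply/forall_inP=> w _; rewrite setDUl.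
  have -> : del_node_edges (B1.2 :|: B2.2) w =
            del_node_edges B1.2 w :|: del_node_edges B2.2 w.
    by apply/setP=> e; rewrite !inE andb_orl.
  have [s [s1' s2']] : exists s, s \in B1.1 :\ w /\ s \in B2.1 :\ w.
    have [<-|vw] := eqVneq v w; last by exists v; rewrite !in_setD1 v1 v2 vw.
    by exists v'; rewrite !in_setD1 v'1 v'2 eq_sym vv'.
  exact: gconnectedU (twoNC_del w s1 t1) (twoNC_del w s2 t2) s1' s2'.
- rewrite neq_ltn; apply/orP; right.
  exact: leq_trans (twoNC_card_gt2 t1 v1 v'1 vv') (subset_leq_card (subsetUl _ _)).
Qed.

Lemma is2NCblock_eq B1 B2 v v' : is2NCblock H B1 -> is2NCblock H B2 ->
  v != v' -> v \in B1.1 -> v' \in B1.1 -> v \in B2.1 -> v' \in B2.1 -> B1 = B2.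
Proof.
case/and3P=> s1 t1 /forallP m1 /and3P[s2 t2 /forallP m2] vv' v1 v'1 v2 v'2.
have [sU tU] := twoNCU s1 s2 t1 t2 vv' v1 v'1 v2 v'2.
have /and3P[_ _ e1] := s1; have /and3P[_ _ e2] := s2.
have /eqP <- : (B1.1 :|: B2.1, B1.2 :|: B2.2) == B1.
  by move/implyP: (m1 (B1.1 :|: B2.1, B1.2 :|: B2.2)); apply; rewrite sU tU /subgraph !subsetUl.
apply/eqP; move/implyP: (m2 (B1.1 :|: B2.1, B1.2 :|: B2.2)); apply.
by rewrite sU tU /subgraph !subsetUr.
Qed.

Lemma twoNC_is2NCblock B : subgraph B H -> twoNC B ->
  exists2 B', is2NCblock H B' & subgraph B B'.
Proof.
move=> sB tB.
pose P B' := [&& subgraph B' H, twoNC B' & subgraph B B'].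
have PB : P B by rewrite /P sB tB /subgraph !subxx; case/and3P: sB.
have [M /and3P[sM tM BM] Mmax] := arg_maxnP (fun B' : graph W => #|B'.1| + #|B'.2|) PB.
exists M => //; apply/and3P; split => //; apply/forallP => B'.
apply/implyP => /and3P[s' t' MB']; have /and3P[m1 m2 _] := MB'.
have := Mmax B'; rewrite /P s' t' (subgraph_trans BM MB') => /(_ isT) le.
have /eqP e1 : M.1 == B'.1.
  rewrite eqEcard m1 -(leq_add2r #|B'.2|); apply: leq_trans le _.
  by rewrite leq_add2l subset_leq_card.
have /eqP e2 : M.2 == B'.2.
  rewrite eqEcard m2 -(leq_add2l #|B'.1|); apply: leq_trans le _.
  by rewrite leq_add2r subset_leq_card.
by case: M B' e1 e2 {sM tM BM Mmax le MB' m1 m2 s' t'} => [? ?] [? ?] /= -> ->.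
Qed.

Lemma twoNC_set1 u : u \in H.1 -> subgraph ([set u], set0) H /\ twoNC ([set u], set0).
Proof.
move=> uH; split; first by rewrite /subgraph sub1set uH sub0set; apply/forall_inP=> e; rewrite inE.
apply/and4P; split => /=; rewrite ?cards1 //; first by apply/set0Pn; exists u; rewrite inE.
  by apply/gconnectedP => x y /set1P-> /set1P->.
apply/forall_inP=> w _; apply/gconnectedP => x y.
by rewrite !inE => /andP[xw /eqP xu] /andP[yw /eqP yu]; subst.
Qed.

Lemma cycle_twoNC (s : seq W) : uniq s -> 2 < size s -> cycle (adj H.1 H.2) s ->
  twoNC (induced_graph H [set x in s]).
Proof.
rewrite /induced_graph; set C := [set x in s]; set E := [set f in H.2 | f \subset C].
move=> uq s3 cycH.
have memC x : (x \in C) = (x \in s) by rewrite inE.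
have cyc : cycle (adj C E) s.
  apply: (sub_in_cycle (P := mem C)) cycH; last by apply/allP=> x xs; change (x \in C); rewrite memC.
  move=> a b aC bC /and3P[_ _ abH].
  by rewrite /adj aC bC inE abH subUset !sub1set aC bC.
have cardC : #|C| = size s by rewrite cardsE (card_uniqP uq).
apply/and4P; split => /=.
- by rewrite -card_gt0 cardC ltnW // ltnW.
- have [x [p Es]] : exists x p, s = x :: p by case: (s) s3 => // x p; exists x, p.
  move: cyc; rewrite Es /cycle rcons_path => /andP[pth _].
  by apply: path_gconnected pth _ => y; rewrite memC Es.
- apply/forall_inP=> w; rewrite memC => /rot_to[i s' Er].
  have: cycle (adj C E) (w :: s') by rewrite -Er rot_cycle.
  have: uniq (w :: s') by rewrite -Er rot_uniq.
  have {}memC x : (x \in C) = (x \in w :: s') by rewrite memC -Er mem_rot.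
  have := s3; rewrite -(size_rot i) Er.
  case: s' {Er} memC => // z s'' memC _ /andP[nw _].
  rewrite /cycle rcons_path /= => /andP[/andP[_ pz] _].
  pose P x := (x != w) && (x \in C).
  have pz' : path (adj (C :\ w) (del_node_edges E w)) z s''.
    apply: (sub_in_path (P := P)) pz; last first.
      apply/allP=> x xs; rewrite /P memC in_cons xs orbT andbT.
      by apply: (contraNneq _ nw) => <-.
    move=> a b /andP[aw aC] /andP[bw bC] /and3P[_ _ abE].
    by rewrite /adj !in_setD1 aw aC bw bC inE abE !inE negb_or eq_sym aw eq_sym bw.
  apply: path_gconnected pz' _ => x; rewrite in_setD1 memC in_cons => /andP[xw].
  by rewrite (negbTE xw).
- by rewrite cardC neq_ltn s3 orbT.
Qed.

Lemma nonbridge_is2NCblock v u : [set v; u] \in H.2 -> ~~ is_bridge H [set v; u] ->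
  exists B, [/\ is2NCblock H B, v \in B.1 & u \in B.1].
Proof.
move=> eH nbr.
have vu : v != u by apply/eqP=> vu; move: (edges_card eH); rewrite vu setUid cards1.
have [vH uH] : v \in H.1 /\ u \in H.1.
  by split; apply: (subsetP (edges_sub eH)); rewrite ?set21 ?set22.
have : connect (adj H.1 (H.2 :\ [set v; u])) u v.
  by move: nbr; rewrite /is_bridge eH negbK => /gconnectedP; apply.
case/connectP => p0 pth0; case: (shortenP pth0) => p pth uq _ {p0 pth0} lst.
have sC : [set x in u :: p] \subset H.1.
  apply/subsetP=> x; rewrite inE in_cons => /orP[/eqP -> //|xp].
  exact: (allP (path_adj_sub pth) x xp).
have cyc : cycle (adj H.1 H.2) (u :: p).
  have evu : adj H.1 H.2 v u by rewrite /adj vH uH eH.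
  rewrite /cycle rcons_path -lst evu andbT.
  by apply: sub_path pth => a b /and3P[aH bH /setD1P[_ eab]]; rewrite /adj aH bH eab.
have p3 : 2 < size (u :: p).
  case: p {sC cyc uq} pth lst => [|y [|y' p']] //= pth lst; first by rewrite lst eqxx in vu.
  by move: pth; rewrite -lst andbT /adj setUC !inE eqxx !andbF.
have [B bB sB] := twoNC_is2NCblock (induced_graph_subgraph sC) (cycle_twoNC uq p3 cyc).
have /and3P[/subsetP sCB _ _] := sB.
by exists B; split => //; apply: sCB; rewrite /= inE ?mem_head // lst mem_last.
Qed.

(* Every non-bridge edge at [v] lies in a block through [v], hence in [B]; without
   a bridge at [v], [H - v] would stay connected through [B - v]. *)
Lemma cut_node_bridge B v : is2NCblock H B -> v \in B.1 -> cut_node H v ->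
  (forall B', is2NCblock H B' -> v \in B'.1 -> B' = B) -> exists u, is_bridge H [set v; u].
Proof.
move=> bB vB /andP[vH ncut] uniqB.
have [/existsP //|/existsP nb] := boolP [exists u, is_bridge H [set v; u]].
have nbB u : [set v; u] \in H.2 -> u \in B.1.
  move=> eH; have [|B' [bB' vB' uB']] := nonbridge_is2NCblock eH.
    by apply/negP => br; apply: nb; exists u.
  by rewrite -(uniqB B' bB' vB').
have /and3P[sB tB _] := bB; have /and3P[sB1 sB2 _] := sB.
have to_B x : x \in H.1 :\ v -> exists2 w, w \in B.1 :\ v &
    connect (adj (H.1 :\ v) (del_node_edges H.2 v)) x w.
  case/setD1P=> xv xH.
  have [w [/and3P[_ _ ewv] wv cxw]] := connect_last_step (gconnectedP _ _ H_connected _ _ xH vH) xv.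
  by exists w => //; rewrite in_setD1 wv nbB // setUC.
exfalso; apply: (negP ncut); apply/gconnectedP => x y /to_B[w1 w1B c1] /to_B[w2 w2B c2].
apply: connect_trans c1 _; rewrite connect_adjC; apply: connect_trans c2 _.
apply: connect_adjS (setSD _ sB1) (del_node_edgesS v sB2) _.
exact: (gconnectedP _ _ (twoNC_del v sB tB)).
Qed.

(* Two nodes of a block [A], one joined by a bridge to a block [C] and the other
   attached to [C], would close a cycle through that bridge. *)
Lemma bridge_attached_absurd A C v v' u : is2NCblock H A -> is2NCblock H C ->
  v != v' -> v \in A.1 -> v' \in A.1 -> is_bridge H [set v; u] -> u \in C.1 ->
  attached H v' C -> False.
Proof.
move=> /and3P[sA tA _] /and3P[sC tC _] vv' vA v'A br uC hv'.
apply: (bridge_disconnected br).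
have inA x y := connect_twoNC_setD1 [set v; u] sA tA (x := x) (y := y).
have inC x y := connect_twoNC_setD1 [set v; u] sC tC (x := x) (y := y).
apply: connect_trans (inA _ _ vA v'A) _.
case/orP: hv' => [v'C | /exists_inP[u' u'C br']]; first exact: inC.
have [e_eq|e_neq] := eqVneq [set v'; u'] [set v; u].
  have [[ev _]|[-> _]] := set2_eq_cases e_eq; first by rewrite ev eqxx in vv'.
  exact: inC.
apply: connect_trans (inC _ _ u'C uC); apply: connect1.
have eH : [set v'; u'] \in H.2 by case/andP: br'.
have /andP[v'H u'H] : (v' \in H.1) && (u' \in H.1).
  by rewrite -!sub1set -subUset; apply: edges_sub.
by rewrite /adj v'H u'H !inE e_neq eH.
Qed.

End Blocks.

Section ModifiedInstance.
Variables (V : finType) (E : {set {set V}}) (T : {set V}).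
Hypothesis E_card : forall e, e \in E -> #|e| = 2.

Lemma mod_edges_card e : e \in mod_edges E T -> #|e| = 2.
Proof.
case/setUP=> /imsetP[x xE ->]; last by rewrite cards2.
by rewrite card_imset ?E_card //; apply: inl_inj.
Qed.

Lemma mod_edges_inr e t : e \in mod_edges E T -> inr t \in e -> e = [set inl t; inr t].
Proof.
case/setUP=> /imsetP[x xE ->]; first by case/imsetP.
by case/set2P => // -[->].
Qed.

(* The only edge at [inr t] is [{inl t, inr t}], so [inr t] is isolated in
   [B - inl t]; as [B - inl t] is connected and [#|B.1| != 2], [B] is [{inr t}]. *)
Lemma twoNC_inr (H B : graph (V + V)%type) t : H.2 \subset mod_edges E T ->
  subgraph B H -> twoNC B -> inr t \in B.1 -> B = ([set inr t], set0).
Proof.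
move=> HE sB tB tB1; have /and3P[_ /subsetP sB2 _] := sB.
have B_sub : B.1 \subset [set inr t; inl t].
  apply/subsetP=> x xB; rewrite !inE; have [->|xl] := eqVneq x (inl t); first by rewrite orbT.
  rewrite orbF eq_sym; apply/negPn/negP=> xr.
  have := gconnectedP _ _ (twoNC_del (inl t) sB tB) (inr t) x.
  rewrite !in_setD1 tB1 xB xl => /(_ isT isT) /connect_first_step /(_ xr) [y].
  case/and3P=> _ _; rewrite inE => /andP[eB].
  by rewrite (mod_edges_inr (subsetP HE _ (sB2 _ eB)) (set21 _ _)) set21.
have B1 : B.1 = [set inr t].
  apply/eqP; rewrite eqEsubset sub1set tB1 andbT; apply/subsetP=> x xB.
  case/set2P: (subsetP B_sub _ xB) => [-> | xl]; first exact: set11.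
  suff eB : B.1 = [set inr t; inl t] by case/and4P: tB => _ _ _; rewrite eB cards2.
  by apply/eqP; rewrite eqEsubset B_sub subUset !sub1set tB1 -xl xB.
have B2 : B.2 = set0.
  apply/setP=> e; rewrite inE; apply/negbTE/negP => eB.
  have := subset_leq_card (subgraph_edge_sub sB eB).
  by rewrite B1 cards1 (mod_edges_card (subsetP HE _ (sB2 _ eB))).
by case: B {sB tB tB1 B_sub sB2} B1 B2 => ? ? /= -> ->.
Qed.

End ModifiedInstance.

Section Degrees.
Variable N : finType.
Variable r : rel N.
Hypothesis r_sym : symmetric r.

Lemma tdeg2_nb_eq x y z w : tdeg r y = 2 -> r y x -> r y z -> r y w ->
  z != x -> w != x -> z = w.
Proof.
move=> d2 yx yz yw zx wx.
have /cards2P[a [b [ab E]]] : #|[set c | r y c]| == 2 by rewrite -/(tdeg r y) d2.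
have : x \in [set c | r y c] by rewrite inE.
have : z \in [set c | r y c] by rewrite inE.
have : w \in [set c | r y c] by rewrite inE.
rewrite E !inE => /orP[]/eqP hw /orP[]/eqP hz /orP[]/eqP hx; subst => //.
all: by rewrite eqxx in zx wx.
Qed.

(* A simple path leaving [x] through [y] and running through degree-2 nodes has no
   choice at any step, so it stops at the first node of degree other than 2. *)
Lemma deg2_path_last_eq x y p q : path r x (y :: p) -> path r x (y :: q) ->
  uniq (x :: y :: p) -> uniq (x :: y :: q) ->
  all (fun z => tdeg r z == 2) (belast y p) -> all (fun z => tdeg r z == 2) (belast y q) ->
  tdeg r (last y p) != 2 -> tdeg r (last y q) != 2 -> last y p = last y q.
Proof.
elim: p x y q => [|z p IH] x y [|w q] //=.
- by move=> _ _ _ _ _ /andP[/eqP ->].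
- by move=> _ _ _ _ /andP[/eqP ->].
move=> /and3P[rxy ryz pz] /and3P[_ ryw pw] u1 u2 /andP[/eqP dy a1] /andP[_ a2] l1 l2.
have zx : z != x by apply: contraTneq u1 => ->; rewrite !inE eqxx !orbT.
have wx : w != x by apply: contraTneq u2 => ->; rewrite !inE eqxx !orbT.
have ryx : r y x by rewrite r_sym.
have zw := tdeg2_nb_eq dy ryx ryz ryw zx wx; subst w.
apply: (IH y) => //=; rewrite ?ryz ?pz ?pw //.
- by case/andP: u1.
- by case/andP: u2.
Qed.

Lemma tdeg_condensed_le cbt a : is_condensed r cbt -> tdeg cbt a <= tdeg r a.
Proof.
move=> Hc; apply: (card_le_of_rel (R := fun b c => exists p, [/\ path r a (c :: p),
   last c p = b, uniq (a :: c :: p) & all (fun z => tdeg r z == 2) (belast c p)])).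
  move=> b; rewrite inE => /Hc[_ _ ab [[|c p] [pth lst uq al]]].
    by move: ab; rewrite -lst /= eqxx.
  by exists c; [rewrite inE; case/andP: pth | exists p].
move=> b b' c; rewrite !inE => /Hc[_ db _ _] /Hc[_ db' _ _] [p [p1 l1 u1 a1]] [q [q1 l2 u2 a2]].
by rewrite -l1 -l2; apply: (deg2_path_last_eq p1 q1) => //; rewrite ?l1 ?l2.
Qed.

Definition edge_set : {set {set N}} :=
  [set [set p.1; p.2] | p in [set p : N * N | r p.1 p.2]].

Lemma sum_tdeg : irreflexive r -> \sum_a tdeg r a = 2 * #|edge_set|.
Proof.
move=> r_irr; have -> : \sum_a tdeg r a = #|[set p : N * N | r p.1 p.2]|.
  rewrite card_set_sum -(pair_big xpredT xpredT (fun a b => nat_of_bool (r a b))) /=.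
  by apply: eq_bigr => a _; rewrite /tdeg card_set_sum.
rewrite -sum1_card (partition_big_imset (fun p : N * N => [set p.1; p.2])) /=.
rewrite mulnC -sum_nat_const; apply: eq_bigr => e /imsetP[[a b]]; rewrite inE /= => rab ->.
rewrite sum1dep_card.
have -> : [set p | (p \in [set p : N * N | r p.1 p.2]) && ([set p.1; p.2] == [set a; b])] =
          [set (a, b); (b, a)].
  apply/setP=> [[x y]]; rewrite !inE /= -!pair_eqE /=.
  apply/andP/idP => [[_ /eqP/set2_eq_cases[[-> ->]|[-> ->]]]|]; rewrite ?eqxx ?orbT //.
  case/orP=> /andP[/eqP -> /eqP ->]; first by rewrite rab eqxx.
  by rewrite r_sym rab setUC eqxx.
have ab : a != b by apply: contraTneq rab => ->; rewrite r_irr.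
by rewrite cards2 -pair_eqE /= (negbTE ab).
Qed.

End Degrees.

Lemma tree_tdeg0_eq (N : finType) (r : rel N) a : is_tree r -> tdeg r a = 0 ->
  forall b, b = a.
Proof.
case=> _ _ _ conn _ /eqP; rewrite cards_eq0 => /eqP nb b.
have [//|ba] := eqVneq b a; rewrite eq_sym in ba.
have [c ac] := connect_first_step (conn a b) ba.
by move/setP: nb => /(_ c); rewrite !inE ac.
Qed.

(* Summing [(if 2 < d then d else 0) + 6 <= 3 (d == 1) + 3 d] over the degrees
   [d >= 1], which add up to [2 (#|N| - 1)].  The one-node tree, whose bound
   [3 * 0 - 6] truncates to [0], is treated separately. *)
Lemma tree_sum_high_tdeg (N : finType) (r : rel N) : is_tree r ->
  \sum_(a | 2 < tdeg r a) tdeg r a <= 3 * #|[set a | tdeg r a == 1]| - 6.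
Proof.
move=> tr; have [_ r_irr r_sym _] := tr; rewrite -/(edge_set r) => ecount.
have [a0 /eqP d0 | no0] := pickP (fun a => tdeg r a == 0).
  by rewrite big1 // => a; rewrite (tree_tdeg0_eq tr d0 a) d0.
have E1 : \sum_a ((if 2 < tdeg r a then tdeg r a else 0) + 6) =
          \sum_(a | 2 < tdeg r a) tdeg r a + #|N| * 6.
  by rewrite big_split -big_mkcond /= -sum_nat_const.
have E2 : \sum_a (3 * (tdeg r a == 1) + 3 * tdeg r a) =
          3 * #|[set a | tdeg r a == 1]| + 3 * (2 * #|edge_set r|).
  by rewrite big_split -!big_distrr card_set_sum sum_tdeg.
have : \sum_a ((if 2 < tdeg r a then tdeg r a else 0) + 6) <=
       \sum_a (3 * (tdeg r a == 1) + 3 * tdeg r a).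
  by apply: leq_sum => a _; have := no0 a; case: (tdeg r a) => [|[|[|m]]] //= _; lia.
rewrite E1 E2 -ecount.
by move: (\sum_(a | _) _) #|edge_set r| #|[set a | _]| => S e L; lia.
Qed.

Lemma card_terminal_leaves (V N : finType) (E : {set {set V}}) (T : {set V})
    (H : graph (V + V)%type) (blk : N -> graph (V + V)%type) (bt : rel N) :
  (forall e, e \in E -> #|e| = 2) -> H.2 \subset mod_edges E T ->
  injective blk -> (forall a, is2NCblock H (blk a)) ->
  (forall a, tdeg bt a = 1 -> #|(blk a).1 :&: mod_terminals T| = 1) ->
  #|[set a | tdeg bt a == 1]| <= #|T|.
Proof.
move=> E_card HE blk_inj blk_ok leaf_term.
rewrite -(card_imset T (@inr_inj V V)).
apply: (card_le_of_rel (R := fun a t => t \in (blk a).1 :&: mod_terminals T)).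
  move=> a; rewrite inE => /eqP/leaf_term/eqP/cards1P[t Et].
  have /setIP[_ tT] : t \in (blk a).1 :&: mod_terminals T by rewrite Et set11.
  by exists t; rewrite // Et set11.
move=> a a' y _ _ /setIP[ta /imsetP[t _ Ey]] /setIP[ta' _]; subst y; apply: blk_inj.
have /and3P[sa ta2 _] := blk_ok a; have /and3P[sa' ta2' _] := blk_ok a'.
by rewrite (twoNC_inr E_card HE sa ta2 ta) (twoNC_inr E_card HE sa' ta2' ta').
Qed.

Section BlockTree.
Variables (W N : finType) (H : graph W) (blk : N -> graph W) (bt : rel N).
Hypothesis edges_sub : forall e, e \in H.2 -> e \subset H.1.
Hypothesis edges_card : forall e, e \in H.2 -> #|e| = 2.
Hypothesis H_connected : gconnected H.1 H.2.
Hypothesis H_block_tree : block_tree H blk bt.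

Lemma cut_node_attached a v : v \in (blk a).1 -> cut_node H v ->
  exists2 c, bt a c & attached H v (blk c).
Proof.
have [_ blk_ok blk_surj _ [bridge_bt cut_bt]] := H_block_tree.
move=> va vcut.
have [b /andP[ba vb]|no_other] := pickP (fun b => (b != a) && (v \in (blk b).1)).
  have := cut_bt v vcut a b; rewrite !inE => /(_ va vb) cab.
  rewrite eq_sym in ba; have [c /and3P[ac _]] := connect_first_step cab ba.
  rewrite inE => vc.
  by exists c; rewrite // /attached vc.
have uniqB B' : is2NCblock H B' -> v \in B'.1 -> B' = blk a.
  move=> bB' vB'; have [b Eb] := blk_surj B' bB'; subst B'.
  by have [->//|ba] := eqVneq b a; move: (no_other b); rewrite ba vB'.
have [u br] := cut_node_bridge edges_sub edges_card H_connected (blk_ok a) va vcut uniqB.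
have uH : u \in H.1 by case/andP: br => /edges_sub/subsetP-> //; rewrite set22.
have [s1 t1] := twoNC_set1 uH.
have [_ /(blk_surj _)[c <-] /and3P[/subsetP sc _ _]] := twoNC_is2NCblock s1 t1.
have uc : u \in (blk c).1 by apply: sc; rewrite set11.
exists c; first exact: bridge_bt br erefl va uc.
by apply/orP; right; apply/exists_inP; exists u.
Qed.

Lemma attached_inj a c v v' : bt a c -> v \in (blk a).1 -> v' \in (blk a).1 ->
  attached H v (blk c) -> attached H v' (blk c) -> v = v'.
Proof.
have [blk_inj blk_ok _ [_ bt_irr _ _ _] _] := H_block_tree.
move=> ac va v'a hv hv'; apply/eqP/negP => /negP vv'.
have absurd := bridge_attached_absurd edges_sub edges_card H_connected (blk_ok a) (blk_ok c).
case/orP: (hv) => [vc | /exists_inP[u uc br]]; last exact: absurd vv' va v'a br uc hv'.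
case/orP: (hv') => [v'c | /exists_inP[u' u'c br']].
  have ca : c = a by apply: blk_inj; exact: is2NCblock_eq (blk_ok c) (blk_ok a) vv' vc v'c va v'a.
  by move: ac; rewrite ca bt_irr.
by rewrite eq_sym in vv'; exact: absurd vv' v'a va br' u'c hv.
Qed.

Lemma card_cut_nodes_le_tdeg a : #|[set v in (blk a).1 | cut_node H v]| <= tdeg bt a.
Proof.
apply: (card_le_of_rel (R := fun v c => bt a c && attached H v (blk c))).
  move=> v; rewrite inE => /andP[va vcut].
  by have [c ac hv] := cut_node_attached va vcut; exists c; rewrite ?inE ?ac.
move=> v v' c; rewrite !inE => /andP[va _] /andP[v'a _] /andP[ac hv] /andP[_ hv'].
exact: attached_inj ac va v'a hv hv'.
Qed.

End BlockTree.

Theorem lemma5p4 (V : finType) (E Un : {set {set V}}) (T : {set V}) (k : nat)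
    (HE : forall e, e \in E -> #|e| = 2) (HUn : Un \subset E)
    (Hk : #|T| = k) (Hk3 : 3 <= k)
    (H : graph (V + V)%type)
    (Hmin : minimal_feasible (mod_edges E T) (mod_unsafe Un) (mod_terminals T) H)
    (N : finType) (blk : N -> graph (V + V)%type) (bt cbt : rel N)
    (HBT : block_tree H blk bt)
    (Hleaf : forall a, tdeg bt a = 1 ->
        #|(blk a).1 :&: mod_terminals T| = 1)
    (HCBT : is_condensed bt cbt) :
  \sum_(a : N | (tdeg bt a != 2) && (1 < tdeg cbt a))
      #|[set v in (blk a).1 | cut_node H v]| <= 3 * k - 6.
Proof.
have [[HsubE /forall_inP Hsub _ Hconn _] _] := Hmin.
have H2 e : e \in H.2 -> #|e| = 2 by move/(subsetP HsubE); apply: mod_edges_card.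
have [blk_inj blk_ok _ bt_tree _] := HBT; have [_ _ bt_sym _ _] := bt_tree.
apply: (@leq_trans (\sum_(a | (tdeg bt a != 2) && (1 < tdeg cbt a)) tdeg bt a)).
  by apply: leq_sum => a _; apply: (card_cut_nodes_le_tdeg Hsub H2 Hconn HBT).
apply: (@leq_trans (\sum_(a | 2 < tdeg bt a) tdeg bt a)).
  apply: (sub_le_big leqnn (fun m n => leq_addr n m)) => a /andP[d2 c1].
  by have := tdeg_condensed_le bt_sym a HCBT; lia.
apply: leq_trans (tree_sum_high_tdeg bt_tree) _.
have := card_terminal_leaves HE HsubE blk_inj blk_ok Hleaf; lia.
Qed.
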